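(* For every sufficiently large integer $m$ there is a pseudoexpander with $m$ roots in which every root has pseudodegree at most $m^{1/4.9}$.
   Context: Logarithms are base 2. A rooted tree is extended if none of its leaves has a sibling. A graph $H$ is a binary tree based graph if it is the edge-disjoint union of extended rooted trees $T_1,\dots,T_m$ with roots $t_1,\dots,t_m$ (the roots of $H$, forming ${\bf Roots}(H)$) such that every vertex that is a leaf of some $T_i$ is a leaf of exactly two of the trees, and any two of the trees have at most one common vertex, which is then a leaf of both. $T_i,T_j$ are adjacent if they share a leaf. A pseudoedge is a pair $\{t_i,t_j\}$ with $T_i,T_j$ adjacent; the pseudodegree of $t_i$ is the number of pseudoedges containing $t_i$. A pseudomatching is a set of pairwise disjoint pseudoedges; it is between disjoint $U,V\subseteq{\bf Roots}(H)$ if each of its pseudoedges has one end in $U$ and one in $V$. $H$ is a pseudoexpander (with $m=|{\bf Roots}(H)|$) if (1) each $T_i$ has height (largest number of vertices on a root-leaf path) at most $(\log m)/4.9+3$, and (2) for any two disjoint $U,V\subseteq {\bf Roots}(H)$ with $|U|,|V|\ge m^{0.999}$ there is a pseudomatching between $U$ and $V$ of size at least $m^{0.999}/3$. *)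

From mathcomp Require Import all_boot.
From Stdlib Require Import Reals.
Set Implicit Arguments. Unset Strict Implicit. Unset Printing Implicit Defensive.

(* Tree T_i is given by its vertex set S i, its root r i, and a parent map
   p i : the edges of T_i are the pairs {v, p i v} for v in S i, v <> r i. *)
Section BTBG.
Variables (m n : nat).
Variables (S : 'I_m -> {set 'I_n}) (p : 'I_m -> 'I_n -> 'I_n) (r : 'I_m -> 'I_n).

Definition rooted_tree (i : 'I_m) : Prop :=
  r i \in S i /\
  (forall v, v \in S i -> v != r i -> p i v \in S i) /\
  (forall v, v \in S i -> exists k, iter k (p i) v = r i).

Definition child (i : 'I_m) (u v : 'I_n) : bool :=
  [&& v \in S i, v != r i & p i v == u].

Definition leaf (i : 'I_m) (v : 'I_n) : bool :=
  (v \in S i) && [forall w, ~~ child i v w].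

Definition sibling (i : 'I_m) (v w : 'I_n) : bool :=
  [&& w != v, child i (p i v) v & child i (p i v) w].

Definition extended (i : 'I_m) : Prop :=
  rooted_tree i /\ forall v w, leaf i v -> ~~ sibling i v w.

Definition tree_edges (i : 'I_m) : {set {set 'I_n}} :=
  [set [set v; p i v] | v in S i :\ r i].

Definition binary_tree_based : Prop :=
  (forall i, extended i) /\
  (forall i j, i != j -> [disjoint tree_edges i & tree_edges j]) /\
  (forall i v, leaf i v -> #|[set j | leaf j v]| = 2) /\
  (forall i j, i != j -> #|S i :&: S j| <= 1 /\
     forall v, v \in S i :&: S j -> leaf i v && leaf j v).

(* Roots(H) = {r i}; we require the m roots to be distinct, so that
   |Roots(H)| = m and roots are identified with indices 'I_m. *)
Definition roots_distinct : Prop := injective r.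

Definition adjacent (i j : 'I_m) : bool :=
  (i != j) && [exists v, leaf i v && leaf j v].

Definition pseudodegree (i : 'I_m) : nat := #|[set j | adjacent i j]|.

(* M is a pseudomatching between U and V (U, V disjoint): each pair (i,j)
   in M stands for the pseudoedge {t_i,t_j} with t_i in U, t_j in V, and
   distinct pseudoedges of M are disjoint. *)
Definition pseudomatching_between (U V : {set 'I_m})
    (M : {set 'I_m * 'I_m}) : Prop :=
  (forall e, e \in M -> [&& e.1 \in U, e.2 \in V & adjacent e.1 e.2]) /\
  (forall e f, e \in M -> f \in M -> e != f ->
     [/\ e.1 != f.1, e.1 != f.2, e.2 != f.1 & e.2 != f.2]).

Local Open Scope R_scope.

Definition log2 (x : R) : R := ln x / ln 2.

Definition pseudoexpander : Prop :=
  binary_tree_based /\ roots_distinct /\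
  (forall i v, leaf i v ->
     exists k, iter k (p i) v = r i /\
       INR k.+1 <= log2 (INR m) / (49 / 10) + 3) /\
  (forall U V : {set 'I_m}, [disjoint U & V] ->
     Rpower (INR m) (999 / 1000) <= INR #|U| ->
     Rpower (INR m) (999 / 1000) <= INR #|V| ->
     exists M, pseudomatching_between U V M /\
       Rpower (INR m) (999 / 1000) / 3 <= INR #|M|).

End BTBG.

(* Let a = floor (m^(1/1000)).  Choose k = 100 (a+1)^2 maps F_j on the m vertices
   such that, for any two sets A and B of t ~ m/(2(a+1)) vertices, some F_j sends a
   point of A into B; such a choice exists by counting, since for a fixed pair (A, B)
   the proportion of failing choices is far below 4^-m.  Keeping only the edges
   x -- F_j x between vertices of degree at most a^4 (the others are few) and adding
   a path through all vertices gives a graph of maximum degree at most a^5 <= m^(10/49)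
   in which any two disjoint t-sets of low-degree vertices are joined by an edge.
   Each vertex x becomes a tree of height 3 whose leaves, one per neighbour y, are
   shared with the tree of y, so pseudoedges are exactly the edges of the graph.
   Finally a maximum pseudomatching between disjoint U, V of size m^0.999 has at least
   m^0.999 / 3 pseudoedges: otherwise the unmatched low-degree parts of U and V would
   still contain two t-sets joined by an edge. *)

From mathcomp Require Import all_boot.
From Stdlib Require Import Reals Lra.
From mathcomp Require Import zify.
(* [Reals] redeclares the [^] notation; restore [expn] on [nat]. *)
Local Notation "m ^ n" := (expn m n) : nat_scope.
Set Implicit Arguments. Unset Strict Implicit. Unset Printing Implicit Defensive.

Lemma card_ffun_avoiding (D T : finType) (A : {set D}) (B : {set T}) :
  #|[set f : {ffun D -> T} | [forall x in A, f x \notin B]]|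
  = #|~: B| ^ #|A| * #|T| ^ #|~: A|.
Proof.
pose F x : pred T := if x \in A then [pred y | y \notin B] else predT.
have -> : [set f : {ffun D -> T} | [forall x in A, f x \notin B]] = [set f in finfun.family F].
  apply/setP=> f; rewrite !inE; apply/forall_inP/familyP => [fA x | fF x xA].
    by rewrite /F; case: ifP => // /fA.
  by have := fF x; rewrite /F xA.
rewrite cardsE card_family foldrE big_map big_enum /= (bigID (mem A)) /=.
rewrite (eq_bigr (fun=> #|~: B|)) => [|x xA]; last first.
  by rewrite /F xA; apply: eq_card => y; rewrite !inE.
rewrite [X in _ * X](eq_bigr (fun=> #|T|)) => [|x xA]; last by rewrite /F (negbTE xA).
by rewrite !prod_nat_const; congr (_ ^ _ * _ ^ _); apply: eq_card => x; rewrite !inE.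
Qed.

Lemma card_bigcup_leq (I T : finType) (P : {pred I}) (F : I -> {set T}) :
  #|\bigcup_(i in P) F i| <= \sum_(i in P) #|F i|.
Proof.
apply: (big_ind2 (fun (X : {set T}) n => #|X| <= n)) => [|X1 n1 X2 n2 le1 le2|//].
  by rewrite cards0.
exact: leq_trans (leq_card_setU X1 X2) (leq_add le1 le2).
Qed.

(* The hypothesis is the union bound: at most [2^|T| * 2^|T|] pairs (A, B), each
   missed by [(|T| - t)^(k t) * |T|^(k (|T| - t))] of the maps. *)
Lemma exists_hitting_ffun (T : finType) (k t : nat) :
  2 ^ #|T| * 2 ^ #|T| * ((#|T| - t) ^ (k * t) * #|T| ^ (k * (#|T| - t)))
    < #|T| ^ (k * #|T|) ->
  exists F : {ffun 'I_k * T -> T}, forall A B : {set T}, #|A| = t -> #|B| = t ->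
    exists2 z, z.2 \in A & F z \in B.
Proof.
move=> count_lt.
pose missing (AB : {set T} * {set T}) : {set {ffun 'I_k * T -> T}} :=
  [set F : {ffun 'I_k * T -> T} | [forall z in setX setT AB.1, F z \notin AB.2]].
pose Pt := [set AB : {set T} * {set T} | (#|AB.1| == t) && (#|AB.2| == t)].
have : #|\bigcup_(AB in Pt) missing AB| < #|{ffun 'I_k * T -> T}|.
  rewrite card_ffun card_prod card_ord; apply: leq_ltn_trans (card_bigcup_leq _ _) _.
  rewrite (eq_bigr (fun=> (#|T| - t) ^ (k * t) * #|T| ^ (k * (#|T| - t)))); last first.
    move=> [A B]; rewrite inE => /andP[/= /eqP cA /eqP cB].
    rewrite card_ffun_avoiding [#|~: B|]cardsCs [#|~: setX _ _|]cardsCs !setCK.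
    by rewrite cardsX cardsT card_prod !card_ord cA cB mulnBr.
  rewrite sum_nat_const; apply: leq_ltn_trans count_lt; rewrite leq_mul2r.
  apply/orP; right; apply: leq_trans (max_card _) _.
  by rewrite card_prod -cardsT -powersetT card_powerset cardsT.
move=> few_missing; have /set0Pn[F] : ~: (\bigcup_(AB in Pt) missing AB) != set0.
  by rewrite -card_gt0 cardsCs setCK subn_gt0.
rewrite inE => /bigcupP hitting; exists F => A B cA cB.
have : F \notin missing (A, B).
  by apply/negP => bad; apply: hitting; exists (A, B); rewrite // inE cA cB !eqxx.
rewrite inE negb_forall => /existsP[z]; rewrite negb_imply negbK inE /= => /andP[/andP[_ zA] Fz].
by exists z.
Qed.

Lemma sum_card_fiber (A B : finType) (f : A -> B) :
  \sum_(y : B) #|[set x | f x == y]| = #|A|.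
Proof.
rewrite -sum1_card (partition_big f predT) //=; apply: eq_bigr => y _.
by rewrite sum1dep_card.
Qed.

Lemma bernoulli_expn a b j : a ^ j * (a + j * b) <= (a + b) ^ j * a.
Proof.
elim: j => [|j IH]; first by rewrite !expn0 mul0n addn0.
rewrite !expnS -mulnA.
apply: leq_trans (_ : a ^ j * ((a + b) * (a + j * b)) <= _); last first.
  by rewrite mulnCA -mulnA leq_mul2l IH orbT.
rewrite mulnCA leq_mul2l mulSn; apply/orP; right; nia.
Qed.

Lemma double_expn_subn m t j : 0 < j -> t <= m -> m - t <= j * t ->
  2 * (m - t) ^ j <= m ^ j.
Proof.
move=> j_gt0 tm mt; have [->|d_gt0] := posnP (m - t); first by rewrite exp0n.
rewrite -(leq_pmul2r d_gt0).
apply: leq_trans (_ : (m - t) ^ j * (m - t + j * t) <= _).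
  by rewrite mulnAC mulnC leq_mul2l mul2n -addnn leq_add2l mt orbT.
by have := bernoulli_expn (m - t) t j; rewrite subnK.
Qed.

Lemma union_bound_lt m t j k : 0 < m -> 0 < j -> t <= m -> m - t <= j * t ->
  j * (2 * m + 1) <= k * t ->
  2 ^ m * 2 ^ m * ((m - t) ^ (k * t) * m ^ (k * (m - t))) < m ^ (k * m).
Proof.
move=> m_gt0 j_gt0 tm mt jk.
rewrite -[k * m](subnKC (leq_mul (leqnn k) tm)) -mulnBr expnD mulnA.
rewrite ltn_pmul2r ?expn_gt0 ?m_gt0 //.
have [K ->] : exists K, k * t = j * (2 * m + 1) + K.
  by exists (k * t - j * (2 * m + 1)); rewrite subnKC.
have halve : (2 * (m - t) ^ j) ^ (2 * m + 1) <= (m ^ j) ^ (2 * m + 1).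
  by rewrite leq_exp2r ?addn1 // double_expn_subn.
have rest : (m - t) ^ K <= m ^ K.
  by have [->|K_gt0] := posnP K; rewrite ?expn0 ?leq_exp2r ?leq_subr.
have : 2 * (2 ^ m * 2 ^ m * (m - t) ^ (j * (2 * m + 1) + K)) <= m ^ (j * (2 * m + 1) + K).
  rewrite [m ^ _]expnD expnM; apply: leq_trans (leq_mul halve rest).
  rewrite expnMn [_ ^ (_ + K)]expnD expnM.
  have -> : 2 ^ (2 * m + 1) = 2 * (2 ^ m * 2 ^ m).
    by rewrite -expnD addnn -mul2n expnD expn1 mulnC.
  by rewrite !mulnA.
have : 0 < m ^ (j * (2 * m + 1) + K) by rewrite expn_gt0 m_gt0.
by move: (m ^ _) (2 ^ m * 2 ^ m * _) => ? ?; lia.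
Qed.

Definition links_subsets (T : finType) (E : rel T) (G : {set T}) (t : nat) : Prop :=
  forall A B : {set T}, [disjoint A & B] -> #|A| = t -> #|B| = t ->
    A \subset G -> B \subset G -> exists a b, [/\ a \in A, b \in B & E a b].

Section SparseGraph.
Variables (k m D : nat) (F : {ffun 'I_k * 'I_m -> 'I_m}).

Definition farc (x y : 'I_m) : bool :=
  (x != y) && [exists j, (F (j, x) == y) || (F (j, y) == x)].
Definition fdegree x := #|[set y | farc x y]|.
Definition low_degree x := fdegree x <= D.
(* The path edges only ensure that every vertex has a neighbour. *)
Definition consecutive (x y : 'I_m) : bool := (x.+1 == y :> nat) || (y.+1 == x :> nat).
Definition sparse_edge x y := (farc x y && low_degree x && low_degree y) || consecutive x y.

Lemma farc_sym : symmetric farc.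
Proof.
move=> x y; rewrite /farc eq_sym; congr (_ && _).
by apply/existsP/existsP=> -[j xy]; exists j; rewrite orbC.
Qed.

Lemma sparse_edge_sym : symmetric sparse_edge.
Proof.
by move=> x y; rewrite /sparse_edge farc_sym /consecutive [(x.+1 == y :> nat) || _]orbC andbAC.
Qed.

Lemma sparse_edge_irr : irreflexive sparse_edge.
Proof. by move=> x; rewrite /sparse_edge /farc eqxx /consecutive orbb /=; lia. Qed.

Lemma sparse_edge_total x : 1 < m -> exists y, sparse_edge x y.
Proof.
move=> m_gt1; have [x_lt|x_last] := ltnP x.+1 m.
  by exists (Ordinal x_lt); rewrite /sparse_edge /consecutive eqxx orbT.
have x_pred : x.-1 < m by have := ltn_ord x; lia.
by exists (Ordinal x_pred); apply/orP; right; apply/orP; right; apply/eqP => /=; lia.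
Qed.

Lemma card_ord_val_le1 (c : nat) : #|[set y : 'I_m | y == c :> nat]| <= 1.
Proof.
apply/card_le1_eqP=> y z; rewrite !inE => /eqP yc /eqP zc.
by apply: val_inj; rewrite /= yc zc.
Qed.

Lemma card_sparse_nbhd x : #|[set y | sparse_edge x y]| <= D + 2.
Proof.
have sub : [set y | sparse_edge x y] \subset
    [set y | farc x y && low_degree x] :|:
    ([set y : 'I_m | y == x.+1 :> nat] :|: [set y : 'I_m | y.+1 == x :> nat]).
  apply/subsetP=> y; rewrite !inE /sparse_edge /consecutive.
  by case: (farc x y) (low_degree x) (low_degree y) => [] [] [] //=; rewrite eq_sym.
apply: leq_trans (subset_leq_card sub) _; apply: leq_trans (leq_card_setU _ _) _.
apply: leq_add.
  case: (boolP (low_degree x)) => [low_x|_]; last first.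
    by rewrite (eq_card0 (fun y => _)) // => y; rewrite !inE andbF.
  by apply: leq_trans low_x; apply: subset_leq_card; apply/subsetP=> y; rewrite !inE andbT.
apply: leq_trans (leq_card_setU _ _) _; rewrite -[2]/(1 + 1).
apply: leq_add; first exact: card_ord_val_le1.
case: (nat_of_ord x) => [|c]; last first.
  apply: leq_trans (card_ord_val_le1 c); apply: subset_leq_card.
  by apply/subsetP=> y; rewrite !inE eqSS.
by rewrite (eq_card0 (fun y => _)) // => y; rewrite !inE.
Qed.

Lemma fdegree_leq x : fdegree x <= k + #|[set z | F z == x]|.
Proof.
have sub : [set y | farc x y] \subset
    [set F (j, x) | j : 'I_k] :|: [set z.2 | z in [set z | F z == x]].
  apply/subsetP=> y; rewrite inE => /andP[_ /existsP[j /orP[/eqP <-|/eqP Fjy]]].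
    by rewrite inE; apply/orP; left; apply/imsetP; exists j.
  by rewrite inE; apply/orP; right; apply/imsetP; exists (j, y); rewrite // inE Fjy.
apply: leq_trans (subset_leq_card sub) _; apply: leq_trans (leq_card_setU _ _) _.
apply: leq_add; last exact: leq_imset_card.
by apply: leq_trans (leq_imset_card _ _) _; rewrite card_ord.
Qed.

Lemma card_high_degree : #|[set x | ~~ low_degree x]| * D.+1 <= 2 * (k * m).
Proof.
rewrite -sum_nat_const.
apply: leq_trans (_ : \sum_(x in [set x | ~~ low_degree x]) fdegree x <= _).
  by apply: leq_sum => x; rewrite inE /low_degree ltnNge.
apply: leq_trans (_ : \sum_x fdegree x <= _).
  by rewrite [X in _ <= X](bigID (mem [set x | ~~ low_degree x])) leq_addr.
apply: leq_trans (_ : \sum_x (k + #|[set z | F z == x]|) <= _).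
  by apply: leq_sum => x _; exact: fdegree_leq.
by rewrite big_split sum_card_fiber sum_nat_const !card_prod !card_ord /= mulnC addnn mul2n.
Qed.

Lemma sparse_edge_links t :
  (forall A B : {set 'I_m}, #|A| = t -> #|B| = t -> exists2 z, z.2 \in A & F z \in B) ->
  links_subsets sparse_edge [set x | low_degree x] t.
Proof.
move=> F_hits A B AB cA cB /subsetP A_low /subsetP B_low.
have [[j a] /= aA FB] := F_hits A B cA cB; exists a, (F (j, a)); split=> //.
have a_low := A_low a aA; have Fa_low := B_low _ FB; rewrite !inE in a_low Fa_low.
rewrite /sparse_edge /farc a_low Fa_low !andbT; apply/orP; left; apply/andP; split.
  by apply: contraTneq FB => <-; rewrite (disjointFr AB aA).
by apply/existsP; exists j; rewrite eqxx.
Qed.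
End SparseGraph.

Lemma exists_subset_card (T : finType) (X : {set T}) t :
  t <= #|X| -> exists2 A : {set T}, A \subset X & #|A| = t.
Proof.
move=> tX; exists [set x in take t (enum X)].
  by apply/subsetP=> x; rewrite inE => /mem_take; rewrite mem_enum.
rewrite cardsE (card_uniqP _) ?take_uniq ?enum_uniq // size_takel //.
by rewrite -cardE.
Qed.

Lemma leq_card_setD2 (T : finType) (U X Y : {set T}) :
  #|U| <= #|U :\: X :\: Y| + #|X| + #|Y|.
Proof.
apply: leq_trans (subset_leq_card (_ : U \subset (U :\: X :\: Y) :|: X :|: Y)) _.
  by apply/subsetP=> x xU; rewrite !inE xU; case: (x \in X) (x \in Y) => [] [].
by apply: leq_trans (leq_card_setU _ _) _; rewrite leq_add2r leq_card_setU.
Qed.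

Section GreedyMatching.
Variables (T : finType) (adj : rel T).

Definition pairs_disjoint (e f : T * T) : bool :=
  [&& e.1 != f.1, e.1 != f.2, e.2 != f.1 & e.2 != f.2].

Definition matching_between (U V : {set T}) (M : {set T * T}) : bool :=
  [forall e in M, [&& e.1 \in U, e.2 \in V & adj e.1 e.2]] &&
  [forall e in M, forall f in M, (e != f) ==> pairs_disjoint e f].

Lemma pairs_disjoint_sym e f : pairs_disjoint e f = pairs_disjoint f e.
Proof. by rewrite /pairs_disjoint !(eq_sym e.1) !(eq_sym e.2); congr (_ && _); exact: andbCA. Qed.

Lemma matching_between_setU1 (U V : {set T}) M a b : [disjoint U & V] -> matching_between U V M ->
  a \in U -> b \in V -> adj a b -> a \notin [set e.1 | e in M] -> b \notin [set e.2 | e in M] ->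
  matching_between U V ((a, b) |: M).
Proof.
move=> UV /andP[/forall_inP M_adj /forall_inP M_disj] aU bV ab a_free b_free.
have ab_f f : f \in M -> pairs_disjoint (a, b) f.
  move=> fM; have /and3P[f1U f2V _] := M_adj f fM; apply/and4P; split=> /=.
  - by apply: contraNneq a_free => ->; apply: imset_f.
  - by apply: contraTneq f2V => <-; rewrite (disjointFr UV aU).
  - by apply: contraTneq bV => ->; rewrite (disjointFr UV f1U).
  - by apply: contraNneq b_free => ->; apply: imset_f.
apply/andP; split; apply/forall_inP=> e /setU1P[-> | eM]; rewrite ?aU ?bV ?ab ?M_adj //.
  by apply/forall_inP=> f /setU1P[-> | fM]; rewrite ?eqxx // ab_f // implybT.
apply/forall_inP=> f /setU1P[-> | fM]; first by rewrite pairs_disjoint_sym ab_f ?implybT.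
by have /forall_inP := M_disj e eM; apply.
Qed.

Lemma matching_betweenP (U V : {set T}) (M : {set T * T}) : reflect
  ((forall e, e \in M -> [&& e.1 \in U, e.2 \in V & adj e.1 e.2]) /\
   (forall e f, e \in M -> f \in M -> e != f ->
      [/\ e.1 != f.1, e.1 != f.2, e.2 != f.1 & e.2 != f.2]))
  (matching_between U V M).
Proof.
apply: (iffP andP) => [[/forall_inP M_adj /forall_inP M_disj] | [M_adj M_disj]].
  split=> // e f eM fM ef.
  by have /forall_inP/(_ f fM) := M_disj e eM; rewrite ef => /and4P.
split; apply/forall_inP=> // e eM; apply/forall_inP=> f fM; apply/implyP=> ef.
exact/and4P/M_disj.
Qed.

Variables (G : {set T}) (t : nat).
Hypothesis adj_links : links_subsets adj G t.

Lemma exists_large_matching (U V : {set T}) : [disjoint U & V] ->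
  exists M, matching_between U V M /\ minn #|U| #|V| < t + #|~: G| + #|M|.
Proof.
move=> UV; have matching0 : matching_between U V set0.
  by apply/andP; split; apply/forall_inP=> e; rewrite inE.
have [M M_matching M_max] := @arg_maxnP _ set0 (matching_between U V) (fun M => #|M|) matching0.
exists M; split=> //; rewrite ltnNge leq_min; apply/negP=> /andP[U_big V_big].
pose free (W : {set T}) f := W :\: [set f e | e in M] :\: ~: G.
have free_big (W : {set T}) (f : T * T -> T) : t + #|~: G| + #|M| <= #|W| -> t <= #|free W f|.
  have := leq_card_setD2 W [set f e | e in M] (~: G).
  have : #|[set f e | e in M]| <= #|M| := leq_imset_card f M.
  by move: #|_ :\: _| #|W| #|M| #|~: G| #|[set f e | e in M]| => ? ? ? ? ?; lia.
have free_good (W : {set T}) (f : T * T -> T) : free W f \subset G.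
  by apply/subsetP=> x; rewrite !inE negbK => /andP[].
have [A sA cA] := exists_subset_card (free_big U fst U_big).
have [B sB cB] := exists_subset_card (free_big V snd V_big).
have free_sub (W : {set T}) f : free W f \subset W := subset_trans (subsetDl _ _) (subsetDl _ _).
have [AU BV] := (subset_trans sA (free_sub _ _), subset_trans sB (free_sub _ _)).
have [a [b [aA bB ab]]] := adj_links (disjointW AU BV UV) cA cB
  (subset_trans sA (free_good _ _)) (subset_trans sB (free_good _ _)).
have /subsetP/(_ a aA) := sA; rewrite !inE => /and3P[_ a_free aU].
have /subsetP/(_ b bB) := sB; rewrite !inE => /and3P[_ b_free bV].
have /M_max : matching_between U V ((a, b) |: M) by exact: matching_between_setU1.
have abM : (a, b) \notin M by apply: contra a_free => abM; apply/imsetP; exists (a, b).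
by rewrite cardsU1 abM /geq /= add1n ltnn.
Qed.
End GreedyMatching.

Section StarForest.
Variables (m : nat) (E : rel 'I_m).
Hypotheses (E_sym : symmetric E) (E_irr : irreflexive E).
Hypothesis E_total : forall x, exists y, E x y.

(* The tree of [x] has a child [stem x y] of its root for every neighbour [y], and
   below it a single leaf [tip x y], the pair {x, y}, which it shares with the tree
   of [y]. *)
Definition vertex : finType := (('I_m + 'I_m * 'I_m) + {set 'I_m})%type.
Definition root x : vertex := inl (inl x).
Definition stem x y : vertex := inl (inr (x, y)).
Definition tip x y : vertex := inr [set x; y].
Definition parent x (v : vertex) : vertex :=
  if v is inr e then stem x (odflt x [pick y in e :\ x]) else root x.
Definition star x : {set vertex} :=
  root x |: ([set stem x y | y in [set y | E x y]] :|: [set tip x y | y in [set y | E x y]]).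

Lemma starP x v : reflect
  [\/ v = root x, exists2 y, E x y & v = stem x y | exists2 y, E x y & v = tip x y]
  (v \in star x).
Proof.
apply: (iffP idP) => [|[->|[y xy ->]|[y xy ->]]]; rewrite /star !inE ?eqxx //.
- case/orP=> [/eqP ->|/orP[]/imsetP[y]]; first exact: Or31.
    by rewrite inE => xy ->; apply: Or32; exists y.
  by rewrite inE => xy ->; apply: Or33; exists y.
- by apply/orP; right; apply/orP; left; apply: imset_f; rewrite inE.
- by apply/orP; right; apply/orP; right; apply: imset_f; rewrite inE.
Qed.

Lemma parent_tip x y : E x y -> parent x (tip x y) = stem x y.
Proof.
move=> xy; have yx : x \notin [set y] by rewrite inE; apply: contraTneq xy => ->; rewrite E_irr.
by rewrite /parent /tip setU1K // pick_set1.
Qed.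

Lemma parent_star x v : v \in star x -> parent x v \in star x.
Proof.
case/starP=> [->|[y xy ->]|[y xy ->]]; apply/starP; first [exact: Or31 | apply: Or32].
by exists y; rewrite ?parent_tip.
Qed.

Local Notation n := #|{: vertex}|.
Definition code : vertex -> 'I_n := @enum_rank vertex.
Definition decode (u : 'I_n) : vertex := enum_val u.

Lemma codeK : cancel code decode. Proof. exact: enum_rankK. Qed.
Lemma decodeK : cancel decode code. Proof. exact: enum_valK. Qed.
Lemma code_inj : injective code. Proof. exact: can_inj codeK. Qed.

Definition forest_set x : {set 'I_n} := code @: star x.
Definition forest_parent x (u : 'I_n) : 'I_n := code (parent x (decode u)).
Definition forest_root x : 'I_n := code (root x).

Local Notation child := (child forest_set forest_parent forest_root).
Local Notation leaf := (leaf forest_set forest_parent forest_root).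

Lemma mem_forest_set x v : (code v \in forest_set x) = (v \in star x).
Proof. exact: mem_imset code_inj. Qed.

Lemma forest_parent_code x v : forest_parent x (code v) = code (parent x v).
Proof. by rewrite /forest_parent codeK. Qed.

Lemma iter_forest_parent x k v :
  iter k (forest_parent x) (code v) = code (iter k (parent x) v).
Proof. by elim: k => //= k ->; rewrite forest_parent_code. Qed.

Lemma child_code x v w :
  child x (code v) (code w) = [&& w \in star x, w != root x & parent x w == v].
Proof. by rewrite /child mem_forest_set forest_parent_code !(inj_eq code_inj). Qed.

Lemma leafP x u : reflect (exists2 y, E x y & u = code (tip x y)) (leaf x u).
Proof.
rewrite -(decodeK u); move: (decode u) => v; apply: (iffP andP) => [[]|[y xy /code_inj ->]].
  rewrite mem_forest_set => /starP[->|[y xy ->]|[y xy ->]] /forallP no_child; last by exists y.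
    have [y xy] := E_total x; have := no_child (code (stem x y)).
    by rewrite child_code; case/negP; apply/and3P; split=> //; apply/starP; apply: Or32; exists y.
  have := no_child (code (tip x y)); rewrite child_code parent_tip // eqxx andbT.
  by case/negP; apply/andP; split; [apply/starP; apply: Or33; exists y|].
split; first by rewrite mem_forest_set; apply/starP; apply: Or33; exists y.
apply/forallP=> w; rewrite -(decodeK w) child_code.
by case: (decode w) => [a|e]; rewrite /= !andbF.
Qed.

Local Notation adjacent := (adjacent forest_set forest_parent forest_root).

Lemma tip_eq x y x' y' : x != x' -> tip x y = tip x' y' -> x = y'.
Proof.
move=> xx' [e]; have := set21 x y; rewrite e => /set2P[x_x'|//].
by rewrite x_x' eqxx in xx'.
Qed.

Lemma adjacent_forest x y : adjacent x y = E x y.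
Proof.
apply/andP/idP => [[xy /existsP[u /andP[/leafP[y' xy' ->] /leafP[x' yx' e]]]]|xy].
  by rewrite E_sym -(tip_eq xy (code_inj e)) in yx'.
split; first by apply: contraTneq xy => ->; rewrite E_irr.
apply/existsP; exists (code (tip x y)); apply/andP; split; apply/leafP; first by exists y.
by exists x; rewrite 1?E_sym // /tip setUC.
Qed.

Lemma forest_links G t : links_subsets E G t -> links_subsets adjacent G t.
Proof.
move=> E_links A B AB cA cB sA sB; have [a [b [aA bB ab]]] := E_links A B AB cA cB sA sB.
by exists a, b; rewrite adjacent_forest.
Qed.

Lemma forest_rooted x : rooted_tree forest_set forest_parent forest_root x.
Proof.
split; first by rewrite mem_forest_set; apply/starP/Or31.
split=> u; rewrite -(decodeK u) mem_forest_set.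
  by rewrite forest_parent_code mem_forest_set => /parent_star.
case/starP=> [->|[y xy ->]|[y xy ->]]; first by exists 0.
  by exists 1; rewrite iter_forest_parent.
by exists 2; rewrite iter_forest_parent.
Qed.

Lemma forest_extended x : extended forest_set forest_parent forest_root x.
Proof.
split=> [|v w /leafP[y xy ->]]; first exact: forest_rooted.
rewrite -(decodeK w) /sibling forest_parent_code parent_tip // !child_code.
apply/and3P=> [[w_tip _ /and3P[/starP[->|[y' _ ->]|[y' xy' ew]] _ //]]].
by rewrite ew parent_tip // => /eqP[e]; rewrite ew e eqxx in w_tip.
Qed.

Lemma stem_in_star x y j : stem x y \in star j -> j = x.
Proof. by case/starP=> [//|[y' _ [->]]|[]]. Qed.

Lemma tree_edge_stem x u : u \in forest_set x :\ forest_root x ->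
  exists y, code (stem x y) \in [set u; forest_parent x u].
Proof.
rewrite -(decodeK u) !inE mem_forest_set (inj_eq code_inj) forest_parent_code.
case/andP=> not_root /starP[eu|[y xy ->]|[y xy ->]]; first by rewrite eu eqxx in not_root.
  by exists y; rewrite set21.
by exists y; rewrite parent_tip ?set22.
Qed.

Lemma tree_edge_sub x u : u \in forest_set x :\ forest_root x ->
  [set u; forest_parent x u] \subset forest_set x.
Proof.
case/setD1P=> u_root u_in; apply/subsetP=> w /set2P[->|->] //.
by have [_ [parent_in _]] := forest_rooted x; apply: parent_in.
Qed.

Lemma forest_edges_disjoint i j : i != j ->
  [disjoint tree_edges forest_set forest_parent forest_root i
          & tree_edges forest_set forest_parent forest_root j].
Proof.
move=> ij; apply/pred0P=> e /=; apply/negP=> /andP[/imsetP[u u_in ->] /imsetP[w w_in e_eq]].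
have [y stem_in] := tree_edge_stem u_in.
rewrite e_eq in stem_in; have := subsetP (tree_edge_sub w_in) _ stem_in.
by rewrite mem_forest_set => /stem_in_star ji; rewrite ji eqxx in ij.
Qed.

Lemma forest_leaf_owners i v : leaf i v -> #|[set j | leaf j v]| = 2.
Proof.
case/leafP=> y iy ->; have -> : [set j | leaf j (code (tip i y))] = [set i; y].
  apply/setP=> j; rewrite inE; apply/leafP/set2P => [[y' _ /code_inj [e]]|[->|->]].
    by apply/set2P; rewrite e set21.
  - by exists y.
  - by exists i; rewrite 1?E_sym // /tip setUC.
by rewrite cards2; case: eqP => // iy_eq; rewrite iy_eq E_irr in iy.
Qed.

Lemma forest_meet i j v : i != j -> v \in forest_set i :&: forest_set j ->
  E i j /\ v = code (tip i j).
Proof.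
move=> ij; rewrite -(decodeK v) inE !mem_forest_set.
case/andP=> /starP[->|[y iy ->]|[y iy ->]] /starP[e|[y' jy' e]|[y' jy' e]];
  try discriminate; try by case: e => eij *; rewrite eij eqxx in ij.
have iy' := tip_eq ij e; move: jy' e; rewrite -iy' => ji ->.
by rewrite E_sym /tip setUC.
Qed.

Lemma forest_meet_leaf i j : i != j -> #|forest_set i :&: forest_set j| <= 1 /\
  forall v, v \in forest_set i :&: forest_set j -> leaf i v && leaf j v.
Proof.
move=> ij; split.
  by apply/card_le1_eqP=> v w /(forest_meet ij)[_ ->] /(forest_meet ij)[_ ->].
move=> v /(forest_meet ij)[ij_edge ->]; apply/andP; split; apply/leafP; first by exists j.
by exists i; rewrite 1?E_sym // /tip setUC.
Qed.

Lemma forest_binary_tree_based :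
  binary_tree_based forest_set forest_parent forest_root.
Proof.
split; first exact: forest_extended.
split; first exact: forest_edges_disjoint.
split; first exact: forest_leaf_owners.
exact: forest_meet_leaf.
Qed.

Lemma forest_roots_distinct : roots_distinct forest_root.
Proof. by move=> x y /code_inj[]. Qed.

Lemma forest_leaf_depth i v : leaf i v -> iter 2 (forest_parent i) v = forest_root i.
Proof. by case/leafP=> y iy ->; rewrite iter_forest_parent. Qed.

Lemma forest_pseudodegree i :
  pseudodegree forest_set forest_parent forest_root i = #|[set j | E i j]|.
Proof. by apply: eq_card => j; rewrite !inE adjacent_forest. Qed.
End StarForest.

Lemma quotient_bounds a m : 5000 <= a -> a * a <= m ->
  let t := m %/ (2 * (a + 1)) in
  [/\ m - t <= 4 * (a + 1) * t, 4 * (a + 1) * (2 * m + 1) <= 100 * (a + 1) ^ 2 * t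
    & 2 * (a + 1) * t <= m].
Proof.
move=> a_big m_big t; have := divn_eq m (2 * (a + 1)); rewrite -/t.
have : m %% (2 * (a + 1)) < 2 * (a + 1) by rewrite ltn_pmod // muln_gt0 addn1.
have m_big' : 5000 * a <= m by apply: leq_trans m_big; rewrite leq_mul2r a_big orbT.
move: (m %% _) => r r_lt m_eq.
have t_pos : 0 < t by rewrite divn_gt0 ?muln_gt0 ?addn1 //; lia.
have st : a + 1 <= (a + 1) * t by rewrite leq_pmulr.
have {}m_eq : m = 2 * ((a + 1) * t) + r by rewrite m_eq mulnCA [t * _]mulnC.
split; rewrite -?mulnA.
- by move: ((a + 1) * t) st m_eq => X ? ?; lia.
- rewrite mulnCA [100 * _]mulnCA leq_mul2l; apply/orP; right.
  by move: ((a + 1) * t) st m_eq => X ? ?; lia.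
- by move: ((a + 1) * t) m_eq => X ?; lia.
Qed.

Lemma expn4_ge_cube a : 5000 <= a -> 1200 * (a + 1) ^ 3 <= a ^ 4.
Proof.
move=> a_big; have : (4 * (a + 1)) ^ 3 <= (5 * a) ^ 3 by rewrite leq_exp2r //; lia.
rewrite !expnMn (expnSr a 3) -[4 ^ 3]/64 -[5 ^ 3]/125; move: ((a + 1) ^ 3) (a ^ 3) => X Y; nia.
Qed.

Lemma exists_sparse_expander a m : 5000 <= a -> a * a <= m ->
  exists (E : rel 'I_m) (G : {set 'I_m}) (t : nat),
    [/\ symmetric E, irreflexive E & forall x, exists y, E x y] /\
    [/\ forall x, #|[set y | E x y]| <= a ^ 5, links_subsets E G t
      & 6 * (a + 1) * (t + #|~: G|) <= 4 * m].
Proof.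
move=> a_big m_big; have [mt jt small_t] := quotient_bounds a_big m_big.
set t := m %/ _ in mt jt small_t; set k := 100 * (a + 1) ^ 2 in jt.
have m_gt1 : 1 < m by apply: leq_trans m_big; nia.
have [F F_hits] : exists F : {ffun 'I_k * 'I_m -> 'I_m}, forall A B : {set 'I_m},
    #|A| = t -> #|B| = t -> exists2 z, z.2 \in A & F z \in B.
  apply: exists_hitting_ffun; rewrite card_ord.
  apply: (union_bound_lt (j := 4 * (a + 1))) => //; [lia | lia | exact: leq_div].
exists (sparse_edge (a ^ 4) F), [set x | low_degree (a ^ 4) F x], t; split; first split.
- exact: sparse_edge_sym.
- exact: sparse_edge_irr.
- by move=> x; apply: sparse_edge_total.
split; last first.
- rewrite (_ : ~: _ = [set x | ~~ low_degree (a ^ 4) F x]); last by apply/setP=> x; rewrite !inE.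
  move: (card_high_degree (a ^ 4) F) (expn4_ge_cube a_big).
  move: #|_| => bad few_bad deg_big.
  suff : 200 * (a + 1) ^ 2 * (6 * (a + 1) * bad) <= 200 * (a + 1) ^ 2 * m.
    by rewrite leq_pmul2l ?muln_gt0 ?expn_gt0 ?addn1 //; rewrite mulnDr; lia.
  apply: leq_trans (_ : bad * (a ^ 4).+1 <= _).
    by rewrite (expnSr (a + 1) 2) in deg_big; move: ((a + 1) ^ 2) (a ^ 4) deg_big => X Y; nia.
  by apply: leq_trans few_bad _; rewrite /k !mulnA.
- exact: sparse_edge_links.
- move=> x; apply: leq_trans (card_sparse_nbhd _ _ x) _.
  have : 0 < a ^ 4 by rewrite expn_gt0; lia.
  by rewrite expnS; move: (a ^ 4) => X; nia.
Qed.

Section RealBounds.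
Local Open Scope R_scope.

Lemma INR_expn (a n : nat) : INR (a ^ n)%nat = INR a ^ n.
Proof. by elim: n => [|n IH]; rewrite ?expn0 // expnS mult_INR IH. Qed.

Lemma INR_leP (a b : nat) : (a <= b)%nat -> INR a <= INR b.
Proof. by move/leP/le_INR. Qed.

Lemma log2_nonneg (m : nat) : (0 < m)%nat -> 0 <= log2 (INR m).
Proof.
move=> m_gt0; have ln2_pos := ln_lt_2; rewrite /log2.
have [m_gt1|<-] := Rle_lt_or_eq_dec 1 _ (INR_leP m_gt0).
  have : ln 1 < ln (INR m) by apply: ln_increasing; lra.
  by rewrite ln_1 => ln_pos; apply/Rlt_le/Rdiv_lt_0_compat; lra.
by rewrite ln_1 /Rdiv Rmult_0_l; apply: Rle_refl.
Qed.

Lemma exists_floor x : 0 <= x -> exists a : nat, INR a <= x < INR a + 1.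
Proof.
move=> x_ge0; have [lb ub] := base_Int_part x.
have ip_ge0 : (0 <= Int_part x)%Z.
  have /(lt_IZR (-1)) : IZR (-1) < IZR (Int_part x) by lra.
  lia.
by exists (Z.to_nat (Int_part x)); rewrite INR_IZR_INZ Znat.Z2Nat.id //; lra.
Qed.

Lemma Rpower_inv_pow x (n : nat) : 0 < x -> (0 < n)%nat -> Rpower x (/ INR n) ^ n = x.
Proof.
move=> x_gt0 n_gt0; have n_neq0 : INR n <> 0 by apply: not_0_INR; lia.
by rewrite -Rpower_pow ?Rpower_mult ?Rinv_l ?Rpower_1 //; apply: exp_pos.
Qed.

Lemma exists_floor_root (b m n : nat) : (0 < n)%nat -> (0 < b ^ n <= m)%nat ->
  exists a : nat, [/\ (b <= a)%nat, (a ^ n <= m)%nat,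
    INR a <= Rpower (INR m) (/ INR n) & Rpower (INR m) (/ INR n) < INR a + 1].
Proof.
move=> n_gt0 /andP[bn_gt0 bn_le]; set x := Rpower (INR m) (/ INR n).
have x_pow : x ^ n = INR m.
  by apply: Rpower_inv_pow => //; apply/lt_0_INR/ltP; apply: leq_trans bn_le.
have x_gt0 : 0 < x by apply: exp_pos.
have [a [a_le a_gt]] := exists_floor (Rlt_le _ _ x_gt0).
exists a; split=> //.
- rewrite leqNgt; apply/negP=> /leP/le_INR; rewrite S_INR => ab.
  have := Rlt_Rpower_l x (INR b) (INR n) (lt_0_INR _ (ltP n_gt0))
    (conj x_gt0 (Rlt_le_trans _ _ _ a_gt ab)).
  rewrite !Rpower_pow ?x_pow -?INR_expn //; last by apply: Rlt_le_trans ab; lra.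
  by move/INR_leP: bn_le; lra.
- by apply/leP/INR_le; rewrite INR_expn -x_pow; apply: pow_incr; split; first exact: pos_INR.
Qed.

Lemma expn_le_Rpower (m a k n : nat) (e : R) : (0 < m)%nat ->
  INR a <= Rpower (INR m) (/ INR n) -> INR k / INR n <= e -> INR (a ^ k)%nat <= Rpower (INR m) e.
Proof.
move=> m_gt0 a_le ke; have m_ge1 : 1 <= INR m by apply: (INR_leP m_gt0).
rewrite INR_expn; apply: Rle_trans (pow_incr _ _ k (conj (pos_INR a) a_le)) _.
rewrite -Rpower_pow ?Rpower_mult; last exact: exp_pos.
by apply: Rle_Rpower => //; rewrite Rmult_comm.
Qed.

Lemma card_le_succ_mul_Rpower (m a n : nat) (e : R) : (0 < m)%nat -> / INR n + e = 1 ->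
  Rpower (INR m) (/ INR n) < INR a + 1 -> INR m <= (INR a + 1) * Rpower (INR m) e.
Proof.
move=> m_gt0 ne a_gt; have e_pos : 0 < Rpower (INR m) e by apply: exp_pos.
rewrite -{1}[INR m]Rpower_1; last by apply: lt_0_INR; apply/ltP.
by rewrite -ne Rpower_plus; apply: Rmult_le_compat_r; lra.
Qed.

Lemma matching_size_bound (s : R) (a m u v c k : nat) :
  INR m <= (INR a + 1) * s -> (6 * (a + 1) * c <= 4 * m)%nat ->
  s <= INR u -> s <= INR v -> (minn u v < c + k)%nat -> s / 3 <= INR k.
Proof.
move=> m_le c_small u_big v_big uv_lt.
have /INR_leP : (minn u v <= c + k)%nat by apply: ltnW.
rewrite plus_INR => uv_le.
have min_big : s <= INR (minn u v) by rewrite /minn; case: ifP.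
have /INR_leP := c_small.
rewrite !mult_INR plus_INR (INR_IZR_INZ 6) (INR_IZR_INZ 4) (INR_IZR_INZ 1) /= => c_le.
have a_pos := pos_INR a.
have : (INR a + 1) * (6 * INR c) <= (INR a + 1) * (4 * s) by nra.
move/Rmult_le_reg_l => /(_ ltac:(lra)); lra.
Qed.
End RealBounds.

Theorem theorem1 :
  exists m0 : nat, forall m : nat, (m0 <= m)%N ->
    exists (n : nat) (S : 'I_m -> {set 'I_n}) (p : 'I_m -> 'I_n -> 'I_n)
           (r : 'I_m -> 'I_n),
      pseudoexpander S p r /\
      forall i : 'I_m,
        (INR (pseudodegree S p r i) <= Rpower (INR m) (10 / 49))%R.
Proof.
exists (5000 ^ 1000) => m m_big.
have [a [a_big a_pow a_le a_gt]] := @exists_floor_root 5000 m 1000 isT m_big.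
have m_gt0 : (0 < m)%N by apply: leq_trans m_big; rewrite expn_gt0.
have a_sq : (a * a <= m)%N.
  by rewrite mulnn; apply: leq_trans a_pow; apply: leq_pexp2l; [lia | exact: isT].
have [E [G [t [[E_sym E_irr E_total] [E_deg E_links G_small]]]]] :=
  exists_sparse_expander a_big a_sq.
have INR1000 : INR 1000 = 1000%R by rewrite INR_IZR_INZ.
exists #|{: vertex m}|, (forest_set E), (@forest_parent m), (@forest_root m); split.
  split; first exact: forest_binary_tree_based.
  split; first exact: forest_roots_distinct.
  split=> [i v /forest_leaf_depth depth | U V UV U_big V_big].
    exists 2; split; first exact: depth.
    by have := log2_nonneg m_gt0; rewrite (INR_IZR_INZ 3) /=; lra.
  have [M [/matching_betweenP M_matching M_big]] :=
    exists_large_matching (forest_links E_sym E_irr E_total E_links) UV.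
  exists M; split; first exact: M_matching.
  apply: matching_size_bound G_small U_big V_big M_big.
  by apply: (card_le_succ_mul_Rpower m_gt0 _ a_gt); rewrite INR1000; lra.
move=> i; rewrite (forest_pseudodegree E_sym E_irr E_total).
apply: Rle_trans (INR_leP (E_deg i)) (expn_le_Rpower m_gt0 a_le _).
by rewrite INR1000 (INR_IZR_INZ 5) /=; lra.
Qed.
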